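(* Let $e_1,e_2,e_3,f_1,f_2,f_3$ be a coframe on a 6-manifold with $de_1=-2e_2\wedge e_3$, $df_1=-2f_2\wedge f_3$ and cyclically. For a parameter $t$ put $c_k=\cos(t+2\pi(k-1)/3)$, $s_k=\sin(t+2\pi(k-1)/3)$, and for constants $\lambda\neq0$, $a$, $b$ define \[X_{2k-1}=\lambda f_k+\lambda(ac_k+b)e_k,\qquad X_{2k}=4s_ke_k\qquad(k=1,2,3),\] $\xi=X_{12}+X_{34}+X_{56}$ and $\Xi=(X_1+iX_2)\wedge(X_3+iX_4)\wedge(X_5+iX_6)$ (here $X_{ab}=X_a\wedge X_b$, and $d$ is the exterior derivative on the 6-manifold, $t$ held fixed). Then there is a constant $\mu$ such that $d(\mathrm{Re}\,\Xi)=\frac{\mu}{2}\,\xi\wedge\xi$ holds for all $t$ if and only if either (i) $(a,b)=(0,-1)$ or $(0,0)$, in which case $\mu=-2/\lambda$; or (ii) $(a,b)=(\pm2,1)$, in which case $\mu=-\frac{\lambda^2+4}{2\lambda}$.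
   Context: The condition $d(\mathrm{Re}\,\Xi)=\frac\mu2\xi\wedge\xi$ is the nearly-half-flat condition for the $SU(3)$-structure $(\xi,\Xi)$ on the 6-dimensional orbits. *)

From HB Require Import structures.
From mathcomp Require Import all_boot all_order all_algebra.
From mathcomp Require Import all_classical all_reals.
From mathcomp Require Import trigo.
Set Implicit Arguments. Unset Strict Implicit. Unset Printing Implicit Defensive.
Import Order.TTheory GRing.Theory Num.Theory.
Local Open Scope ring_scope.

(* Constant-coefficient differential forms on the 6-manifold, expressed in the
   global coframe (e_1,e_2,e_3,f_1,f_2,f_3), indexed 0..5 in this order.
   A form is the (full) exterior algebra element sum_S w(S) e_S, where for
   S = {i_1 < ... < i_k}, e_S = e_{i_1} /\ ... /\ e_{i_k}. *)
Notation form R := {ffun {set 'I_6} -> R}.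

Section Forms.
Variable R : comNzRingType.

(* sign of e_A /\ e_B = sign * e_(A u B) for disjoint A, B *)
Definition shuffle_sign (A B : {set 'I_6}) : R :=
  (-1) ^+ #|[set p : 'I_6 * 'I_6 | [&& p.1 \in A, p.2 \in B & (p.2 < p.1)%N]]|.

Definition scalef (c : R) (a : form R) : form R := [ffun S => c * a S].

Definition wedge (a b : form R) : form R :=
  [ffun S : {set 'I_6} => \sum_(A : {set 'I_6} | A \subset S)
               shuffle_sign A (S :\: A) * a A * b (S :\: A)].

Definition basisf (A : {set 'I_6}) : form R := [ffun S : {set 'I_6} => (S == A)%:R].
Definition one_form (i : 'I_6) : form R := basisf [set i].

(* cyclic successor inside each block {0,1,2} (the e's) and {3,4,5} (the f's) *)
Definition cyc (i : 'I_6) (k : nat) : 'I_6 :=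
  inord (3 * (i %/ 3) + (i %% 3 + k) %% 3).

Definition dgen (i : 'I_6) : form R :=
  scalef (-2) (wedge (one_form (cyc i 1)) (one_form (cyc i 2))).

(* d on a basis monomial, by the graded Leibniz rule *)
Definition dbasis (A : {set 'I_6}) : form R :=
  \sum_(j in A)
     scalef ((-1) ^+ #|[set i in A | (i < j)%N]|)
       (wedge (wedge (basisf [set i in A | (i < j)%N]) (dgen j))
              (basisf [set i in A | (j < i)%N])).

Definition dform (a : form R) : form R := \sum_(A : {set 'I_6}) scalef (a A) (dbasis A).

(* complex-valued forms as pairs (real part, imaginary part) *)
Definition cwedge (x y : form R * form R) : form R * form R :=
  (wedge x.1 y.1 - wedge x.2 y.2, wedge x.1 y.2 + wedge x.2 y.1).

End Forms.

Section Example.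
Variable R : realType.

Definition e_ (k : 'I_3) : form R := one_form R (inord k).
Definition f_ (k : 'I_3) : form R := one_form R (inord (3 + k)).

(* k is 0-based: c_{k+1} = cos(t + 2 pi k / 3) *)
Definition ck (t : R) (k : 'I_3) : R := cos (t + 2 * pi * k%:R / 3).
Definition sk (t : R) (k : 'I_3) : R := sin (t + 2 * pi * k%:R / 3).

Definition Xodd (lam a b t : R) (k : 'I_3) : form R :=
  scalef lam (f_ k) + scalef (lam * (a * ck t k + b)) (e_ k).
Definition Xeven (t : R) (k : 'I_3) : form R := scalef (4 * sk t k) (e_ k).

Definition xi (lam a b t : R) : form R :=
  \sum_(k < 3) wedge (Xodd lam a b t k) (Xeven t k).

Definition Xc (lam a b t : R) (k : 'I_3) : form R * form R :=
  (Xodd lam a b t k, Xeven t k).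

Definition Xi (lam a b t : R) : form R * form R :=
  cwedge (cwedge (Xc lam a b t 0) (Xc lam a b t 1)) (Xc lam a b t 2).

End Example.

(* All forms involved have constant coefficients in the coframe, so d(Re Xi) = mu/2 xi/\xi
   is a finite family of polynomial identities between the coefficients.  Only the three monomials
   e_i e_j f_i f_j with {i, j, k} = {1, 2, 3} survive, and by c_i c_j = c_k^2 - 3/4,
   s_i s_j = 1/4 - c_k^2 and c_1 + c_2 + c_3 = 0 the coefficient of the k-th one is
   P(c_k) for a single quadratic P, the [residual].  Hence the equation holds for all t
   iff P vanishes on [-1, 1], i.e. iff its three coefficients vanish, and this
   polynomial system is solved by hand. *)

From mathcomp Require Import all_boot all_order all_algebra.
From mathcomp Require Import reals trigo.
From mathcomp Require Import ring lra zify.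

Set Implicit Arguments.
Unset Strict Implicit.
Unset Printing Implicit Defensive.
Import Order.TTheory GRing.Theory Num.Theory.
Local Open Scope ring_scope.

Section ExteriorAlgebra.
Variable R : comNzRingType.
Implicit Types (c d : R) (x y z : form R) (A B S : {set 'I_6}).

Lemma scalefDr c x y : scalef c (x + y) = scalef c x + scalef c y.
Proof. by apply/ffunP => S; rewrite !ffunE mulrDr. Qed.

Lemma scalefDl c d x : scalef (c + d) x = scalef c x + scalef d x.
Proof. by apply/ffunP => S; rewrite !ffunE mulrDl. Qed.

Lemma scalef0 c : scalef c 0 = 0 :> form R.
Proof. by apply/ffunP => S; rewrite !ffunE mulr0. Qed.

Lemma scale0f x : scalef 0 x = 0.
Proof. by apply/ffunP => S; rewrite !ffunE mul0r. Qed.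

Lemma scale1f x : scalef 1 x = x.
Proof. by apply/ffunP => S; rewrite !ffunE mul1r. Qed.

Lemma scaleN1f x : scalef (-1) x = - x.
Proof. by apply/ffunP => S; rewrite !ffunE mulN1r. Qed.

Lemma scalefA c d x : scalef c (scalef d x) = scalef (c * d) x.
Proof. by apply/ffunP => S; rewrite !ffunE mulrA. Qed.

Lemma scalef_sum (I : Type) (r : seq I) (P : pred I) (F : I -> form R) c :
  scalef c (\sum_(i <- r | P i) F i) = \sum_(i <- r | P i) scalef c (F i).
Proof. exact: (big_morph _ (scalefDr c) (scalef0 c)). Qed.

Lemma wedgeDl x y z : wedge (x + y) z = wedge x z + wedge y z.
Proof.
apply/ffunP => S; rewrite !ffunE -big_split; apply: eq_bigr => A _.
by rewrite !ffunE mulrDr mulrDl.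
Qed.

Lemma wedgeDr x y z : wedge x (y + z) = wedge x y + wedge x z.
Proof.
apply/ffunP => S; rewrite !ffunE -big_split; apply: eq_bigr => A _.
by rewrite !ffunE mulrDr.
Qed.

Lemma wedge0f y : wedge 0 y = 0.
Proof. by apply/ffunP => S; rewrite !ffunE big1 // => A _; rewrite ffunE mulr0 mul0r. Qed.

Lemma wedgef0 y : wedge y 0 = 0.
Proof. by apply/ffunP => S; rewrite !ffunE big1 // => A _; rewrite ffunE mulr0. Qed.

Lemma wedgeZl c x y : wedge (scalef c x) y = scalef c (wedge x y).
Proof.
apply/ffunP => S; rewrite !ffunE big_distrr; apply: eq_bigr => A _.
by rewrite ffunE mulrCA -!mulrA.
Qed.

Lemma wedgeZr c x y : wedge x (scalef c y) = scalef c (wedge x y).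
Proof.
apply/ffunP => S; rewrite !ffunE big_distrr; apply: eq_bigr => A _.
by rewrite ffunE mulrCA.
Qed.

Lemma subset_setD_eq A B S :
  (A \subset S) && (S :\: A == B) = [disjoint A & B] && (S == A :|: B).
Proof.
apply/andP/andP => [[sAS /eqP <-] | [dAB /eqP ->]].
  split; first by rewrite -setI_eq0 setIDA setDIl setDv set0I.
  by rewrite -{1}(setID S A) (setIidPr sAS).
split; first exact: subsetUl.
by rewrite setDUl setDv set0U; apply/eqP/setDidPl; rewrite disjoint_sym.
Qed.

Lemma wedge_basisf A B : wedge (basisf R A) (basisf R B) =
  if [disjoint A & B] then scalef (shuffle_sign R A B) (basisf R (A :|: B)) else 0.
Proof.
apply/ffunP => S; rewrite ffunE.
rewrite (eq_bigr (fun C => if C == A then shuffle_sign R A (S :\: A) * (S :\: A == B)%:R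
                           else 0)); last first.
  by move=> C _; rewrite !ffunE; case: eqP => [->|]; rewrite ?mulr1 ?mulr0 ?mul0r.
rewrite -big_mkcondr (eq_bigl (fun C => (C == A) && (A \subset S))); last first.
  by move=> C; rewrite andbC; case: eqP => [->|].
have [sAS|nsAS] := boolP (A \subset S); last first.
  rewrite big_pred0; last by move=> C; rewrite andbF.
  case: ifP => _; rewrite !ffunE //; case: eqP => [eS|_]; last by rewrite mulr0.
  by move: nsAS; rewrite eS subsetUl.
rewrite (eq_bigl (pred1 A)) => [|C]; last by rewrite andbT.
rewrite big_pred1_eq; have := subset_setD_eq A B S; rewrite sAS /=.
case: eqP => [<-|_] /esym; last first.
  by rewrite mulr0; case: ifP => _; rewrite !ffunE //= => ->; rewrite mulr0.
by case/andP=> dAB /eqP eS; rewrite dAB !ffunE -eS eqxx.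
Qed.
End ExteriorAlgebra.

Section ExteriorDerivative.
Variable R : comNzRingType.
Implicit Types (c : R) (x y : form R).

Lemma dformD x y : dform (x + y) = dform x + dform y.
Proof. by rewrite /dform -big_split; apply: eq_bigr => A _; rewrite ffunE scalefDl. Qed.

Lemma dform0 : dform (0 : form R) = 0.
Proof. by rewrite /dform big1 // => A _; rewrite ffunE scale0f. Qed.

Lemma dformZ c x : dform (scalef c x) = scalef c (dform x).
Proof. by rewrite /dform scalef_sum; apply: eq_bigr => A _; rewrite ffunE scalefA. Qed.

Lemma dform_basisf A : dform (basisf R A) = dbasis R A.
Proof.
rewrite /dform (bigD1 A) //= ffunE eqxx scale1f big1 ?addr0 // => B /negPf nBA.
by rewrite ffunE nBA scale0f.
Qed.

End ExteriorDerivative.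

(* A monomial e_S is encoded by the bit mask of S (only its first six bits count), a form
   by a list of (coefficient, monomial) pairs, possibly with repetitions. *)
Inductive expr := EVar of nat | EInt of int | EAdd of expr & expr | EMul of expr & expr.

Definition mask := seq bool.
Definition sform := seq (expr * mask).

Local Open Scope nat_scope.

Definition mnth (s : mask) i := nth false s i.
Definition mnorm (s : mask) : mask := mkseq (mnth s) 6.
Definition munion (s1 s2 : mask) : mask := mkseq (fun i => mnth s1 i || mnth s2 i) 6.
Definition mdisjoint (s1 s2 : mask) := all (fun i => ~~ (mnth s1 i && mnth s2 i)) (iota 0 6).
Definition minversions (s1 s2 : mask) : nat :=
  sumn [seq count (fun j => [&& mnth s1 i, mnth s2 j & j < i]) (iota 0 6) | i <- iota 0 6].
Definition msign (s1 s2 : mask) : int := ((-1) ^+ minversions s1 s2)%R.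
Definition msingle n : mask := mkseq (fun i => i == n) 6.
Definition mbelow (s : mask) j : mask := mkseq (fun i => mnth s i && (i < j)) 6.
Definition mabove (s : mask) j : mask := mkseq (fun i => mnth s i && (j < i)) 6.
Definition mcard (s : mask) := count (mnth s) (iota 0 6).

Fixpoint swedge_term (p : expr * mask) (l : sform) : sform :=
  if l is q :: l' then
    if mdisjoint p.2 q.2 then
      (EMul (EMul (EInt (msign p.2 q.2)) p.1) q.1, munion p.2 q.2) :: swedge_term p l'
    else swedge_term p l'
  else [::].
Fixpoint swedge (l1 l2 : sform) : sform :=
  if l1 is p :: l1' then swedge_term p l2 ++ swedge l1' l2 else [::].
Definition sscale (c : expr) (l : sform) : sform := map (fun p => (EMul c p.1, p.2)) l.
Definition sbasis (s : mask) : sform := [:: (EInt 1, s)].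

Definition cycn (j k : nat) := 3 * (j %/ 3) + (j %% 3 + k) %% 3.
Definition sdgen j : sform :=
  sscale (EInt (-2)) (swedge (sbasis (msingle (cycn j 1))) (sbasis (msingle (cycn j 2)))).
Definition sdbasis (s : mask) : sform :=
  flatten [seq sscale (EInt ((-1) ^+ mcard (mbelow s j))%R)
                 (swedge (swedge (sbasis (mbelow s j)) (sdgen j)) (sbasis (mabove s j)))
          | j <- [seq j <- iota 0 6 | mnth s j]].
Fixpoint sd (l : sform) : sform :=
  if l is p :: l' then sscale p.1 (sdbasis p.2) ++ sd l' else [::].

Definition scwedge (x y : sform * sform) : sform * sform :=
  (swedge x.1 y.1 ++ sscale (EInt (-1)) (swedge x.2 y.2), swedge x.1 y.2 ++ swedge x.2 y.1).

Fixpoint scoeff (l : sform) (m : mask) : expr :=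
  if l is p :: l' then
    if mnorm p.2 == m then EAdd p.1 (scoeff l' m) else scoeff l' m
  else EInt 0.
Definition ssupport (l1 l2 : sform) := undup (map (fun p => mnorm p.2) (l1 ++ l2)).

Local Close Scope nat_scope.

Definition set_of_mask (s : mask) : {set 'I_6} := [set i : 'I_6 | mnth s i].
Definition mask_of_set (S : {set 'I_6}) : mask := mkseq (fun i => inord i \in S) 6.

Lemma set_of_mnorm s : set_of_mask (mnorm s) = set_of_mask s.
Proof. by apply/setP => i; rewrite !inE /mnorm /mnth nth_mkseq. Qed.

Lemma set_of_munion s1 s2 : set_of_mask (munion s1 s2) = set_of_mask s1 :|: set_of_mask s2.
Proof. by apply/setP => i; rewrite !inE /munion /mnth nth_mkseq. Qed.

Lemma set_of_msingle n : (n < 6)%N -> set_of_mask (msingle n) = [set inord n].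
Proof.
move=> ltn6; apply/setP => i; rewrite !inE /mnth nth_mkseq //.
by apply/eqP/eqP => [<-|->]; [rewrite inord_val | rewrite inordK].
Qed.

Lemma set_of_mbelow s (j : 'I_6) :
  set_of_mask (mbelow s j) = [set i in set_of_mask s | (i < j)%N].
Proof. by apply/setP => i; rewrite !inE /mnth nth_mkseq. Qed.

Lemma set_of_mabove s (j : 'I_6) :
  set_of_mask (mabove s j) = [set i in set_of_mask s | (j < i)%N].
Proof. by apply/setP => i; rewrite !inE /mnth nth_mkseq. Qed.

Lemma mnorm_idem s : mnorm (mnorm s) = mnorm s.
Proof.
by apply: (@eq_from_nth _ false) => [|i]; rewrite !size_mkseq // => lti6;
  rewrite /mnth !nth_mkseq.
Qed.

Lemma mask_of_set_of_mask s : mask_of_set (set_of_mask s) = mnorm s.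
Proof.
apply: (@eq_from_nth _ false) => [|i]; rewrite !size_mkseq // => lti6.
by rewrite !nth_mkseq // inE inordK.
Qed.

Lemma mnorm_eq_mask_of_set s S : (mnorm s == mask_of_set S) = (set_of_mask s == S).
Proof.
apply/eqP/eqP => [eS|<-]; last by rewrite mask_of_set_of_mask.
by apply/setP => i; rewrite -set_of_mnorm eS !inE /mnth nth_mkseq // inord_val.
Qed.

Lemma card_set_of_mask s : (#|set_of_mask s| = mcard s)%N.
Proof.
by rewrite -sum1dep_card /mcard -sum1_count -[iota 0 6]/(index_iota 0 6) big_mkord.
Qed.

Lemma disjoint_set_of_mask s1 s2 :
  [disjoint set_of_mask s1 & set_of_mask s2] = mdisjoint s1 s2.
Proof.
rewrite -setI_eq0; apply/eqP/allP => [/setP dis i | dis].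
  by rewrite mem_iota => /= lti6; have := dis (Ordinal lti6); rewrite !inE => ->.
apply/setP => i; rewrite !inE.
by have := dis i; rewrite mem_iota ltn_ord => /(_ isT)/negPf.
Qed.

Lemma shuffle_sign_set_of_mask (R : comNzRingType) s1 s2 :
  shuffle_sign R (set_of_mask s1) (set_of_mask s2) = (msign s1 s2)%:~R.
Proof.
rewrite /shuffle_sign /msign rmorphXn rmorphN1; congr (_ ^+ _).
rewrite -sum1dep_card big_mkcond /=.
rewrite -(pair_bigA _ (fun i j => if [&& i \in set_of_mask s1, j \in set_of_mask s2
                                    & (j < i)%N] then 1%N else 0%N)) /=.
rewrite /minversions sumnE big_map -[iota 0 6]/(index_iota 0 6) big_mkord.
apply: eq_bigr => i _; rewrite -sum1_count big_mkord [RHS]big_mkcond.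
by apply: eq_bigr => j _; rewrite !inE.
Qed.

Section Evaluation.
Variables (R : comNzRingType) (env : nat -> R).

Fixpoint eval_expr (e : expr) : R :=
  match e with
  | EVar n => env n
  | EInt z => z%:~R
  | EAdd e1 e2 => eval_expr e1 + eval_expr e2
  | EMul e1 e2 => eval_expr e1 * eval_expr e2
  end.

Definition eval_sform (l : sform) : form R :=
  \sum_(p <- l) scalef (eval_expr p.1) (basisf R (set_of_mask p.2)).

Lemma eval_sform_nil : eval_sform [::] = 0.
Proof. by rewrite /eval_sform big_nil. Qed.

Lemma eval_sform_cons p l :
  eval_sform (p :: l) = scalef (eval_expr p.1) (basisf R (set_of_mask p.2)) + eval_sform l.
Proof. by rewrite /eval_sform big_cons. Qed.

Lemma eval_sform_cat l1 l2 : eval_sform (l1 ++ l2) = eval_sform l1 + eval_sform l2.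
Proof. by rewrite /eval_sform big_cat. Qed.

Lemma eval_sform_flatten (I : Type) (f : I -> sform) r :
  eval_sform (flatten (map f r)) = \sum_(j <- r) eval_sform (f j).
Proof.
elim: r => [|j r IH]; first by rewrite big_nil eval_sform_nil.
by rewrite /= eval_sform_cat big_cons IH.
Qed.

Lemma eval_sbasis s : eval_sform (sbasis s) = basisf R (set_of_mask s).
Proof. by rewrite eval_sform_cons eval_sform_nil addr0 /= rmorph1 scale1f. Qed.

Lemma eval_sscale c l : eval_sform (sscale c l) = scalef (eval_expr c) (eval_sform l).
Proof.
elim: l => [|p l IH]; first by rewrite !eval_sform_nil scalef0.
by rewrite /= !eval_sform_cons IH scalefDr scalefA.
Qed.

Lemma eval_swedge_term p l :
  eval_sform (swedge_term p l) =
  wedge (scalef (eval_expr p.1) (basisf R (set_of_mask p.2))) (eval_sform l).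
Proof.
elim: l => [|q l IH]; first by rewrite eval_sform_nil wedgef0.
rewrite /= eval_sform_cons wedgeDr -IH wedgeZl wedgeZr wedge_basisf.
rewrite disjoint_set_of_mask; case: ifP => _; last by rewrite !scalef0 add0r.
rewrite eval_sform_cons set_of_munion shuffle_sign_set_of_mask /= !scalefA.
by rewrite [_ * (msign _ _)%:~R]mulrC !mulrA.
Qed.

Lemma eval_swedge l1 l2 : eval_sform (swedge l1 l2) = wedge (eval_sform l1) (eval_sform l2).
Proof.
elim: l1 => [|p l1 IH]; first by rewrite eval_sform_nil wedge0f.
by rewrite /= eval_sform_cat eval_sform_cons wedgeDl IH eval_swedge_term.
Qed.

Lemma eval_scwedge x1 x2 y1 y2 :
  cwedge (eval_sform x1, eval_sform x2) (eval_sform y1, eval_sform y2) =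
  (eval_sform (scwedge (x1, x2) (y1, y2)).1, eval_sform (scwedge (x1, x2) (y1, y2)).2).
Proof. by rewrite /cwedge /= !eval_sform_cat eval_sscale !eval_swedge /= rmorphN1 scaleN1f. Qed.

Lemma eval_sdgen (j : 'I_6) : eval_sform (sdgen j) = dgen R j.
Proof.
have cyc6 k : (cycn j k < 6)%N by rewrite /cycn; have := ltn_ord j; lia.
by rewrite eval_sscale eval_swedge !eval_sbasis !set_of_msingle.
Qed.

Lemma eval_sdbasis s : eval_sform (sdbasis s) = dbasis R (set_of_mask s).
Proof.
rewrite eval_sform_flatten big_filter -[iota 0 6]/(index_iota 0 6) big_mkord /dbasis.
rewrite big_mkcond [RHS]big_mkcond; apply: eq_bigr => j _; rewrite inE.
case: (mnth s j) => //.
by rewrite eval_sscale !eval_swedge !eval_sbasis eval_sdgen -card_set_of_mask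
  set_of_mbelow set_of_mabove /= rmorphXn rmorphN1.
Qed.

Lemma eval_sd l : eval_sform (sd l) = dform (eval_sform l).
Proof.
elim: l => [|p l IH]; first by rewrite eval_sform_nil dform0.
by rewrite /= eval_sform_cat eval_sform_cons dformD dformZ dform_basisf IH
  eval_sscale eval_sdbasis.
Qed.
End Evaluation.

Section Coefficients.
Variables (R : comNzRingType) (env : nat -> R).
Local Notation eval_expr := (eval_expr env).
Local Notation eval_sform := (eval_sform env).

Lemma eval_sform_coeff l S : eval_sform l S = eval_expr (scoeff l (mask_of_set S)).
Proof.
elim: l => [|p l IH]; first by rewrite eval_sform_nil ffunE.
rewrite eval_sform_cons !ffunE IH /= mnorm_eq_mask_of_set eq_sym.
by case: eqP; rewrite ?mulr1 ?mulr0 ?add0r.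
Qed.

Lemma scoeff_notin l m : m \notin map (fun p => mnorm p.2) l -> scoeff l m = EInt 0.
Proof.
elim: l => [|p l IH] //=; rewrite inE negb_or => /andP [nmp /IH ->].
by rewrite eq_sym (negPf nmp).
Qed.

Lemma eval_sform_eqP l1 l2 :
  eval_sform l1 = eval_sform l2 <->
  {in ssupport l1 l2, forall m, eval_expr (scoeff l1 m) = eval_expr (scoeff l2 m)}.
Proof.
split=> [e12 m supp_m | e12].
  have : all (fun m => mnorm m == m) (ssupport l1 l2).
    by rewrite all_undup all_map; elim: (l1 ++ l2) => //= p l ->; rewrite mnorm_idem eqxx.
  move/allP/(_ m supp_m)/eqP <-.
  by rewrite -!mask_of_set_of_mask -!eval_sform_coeff e12.
apply/ffunP => S; rewrite !eval_sform_coeff.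
have [/e12 //|] := boolP (mask_of_set S \in ssupport l1 l2).
by rewrite mem_undup map_cat mem_cat negb_or => /andP [/scoeff_notin -> /scoeff_notin ->].
Qed.
End Coefficients.

Section Trigonometry.
Variable R : realType.
Implicit Types x t : R.

Lemma cos_mulr3n x : cos (x *+ 3) = 4 * cos x ^+ 3 - 3 * cos x.
Proof.
rewrite mulrS cosD cos_mulr2n sin_mulr2n.
have s2 : sin x ^+ 2 = 1 - cos x ^+ 2 by rewrite sin2cos2.
transitivity (cos x * (cos x ^+ 2 *+ 2 - 1) - sin x ^+ 2 * cos x *+ 2); first ring.
by rewrite s2; ring.
Qed.

Lemma cos_2pi3 : cos (2 * pi / 3) = - 1 / 2 :> R.
Proof.
set x := cos _.
have cos3 : 4 * x ^+ 3 - 3 * x = 1.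
  by rewrite -cos_mulr3n -[RHS]cos2pi; congr cos; rewrite mulr2n; field.
have x_lt1 : x < 1.
  rewrite /x -[X in _ < X]cos0 ltr_cos ?in_itv /= ?lexx ?pi_ge0 ?divr_gt0 ?mulr_gt0 ?pi_gt0 //.
  by have := @pi_gt0 R; rewrite divr_ge0 ?mulr_ge0 ?ler_pdivrMr //= ?pi_ge0 //; lra.
have : (x - 1) * (2 * x + 1) ^+ 2 = 0.
  by transitivity (4 * x ^+ 3 - 3 * x - 1); [ring | rewrite cos3 subrr].
move/eqP; rewrite mulf_eq0 expf_eq0 /= => /orP [|/eqP x_eq]; first by rewrite subr_eq0 lt_eqF.
have -> : x = ((2 * x + 1) - 1) / 2 by field.
by rewrite x_eq add0r.
Qed.

Lemma sin_2pi3_sqr : sin (2 * pi / 3) ^+ 2 = 3 / 4 :> R.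
Proof. by rewrite sin2cos2 cos_2pi3; field. Qed.

Definition cos_third t (n : nat) : R := cos (t + 2 * pi * n%:R / 3).
Definition sin_third t (n : nat) : R := sin (t + 2 * pi * n%:R / 3).

Lemma cos_third0 t : cos_third t 0 = cos t.
Proof. by rewrite /cos_third mulr0 mul0r addr0. Qed.

Lemma third_angleS3 t n : t + 2 * pi * n.+3%:R / 3 = t + 2 * pi * n%:R / 3 + pi *+ 2.
Proof. by rewrite -addn3 natrD mulr2n; field. Qed.

Lemma cos_thirdS3 t n : cos_third t n.+3 = cos_third t n.
Proof. by rewrite /cos_third third_angleS3 cosD2pi. Qed.

Lemma sin_thirdS3 t n : sin_third t n.+3 = sin_third t n.
Proof. by rewrite /sin_third third_angleS3 sinD2pi. Qed.

Lemma cos_third_relations t n :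
  [/\ cos_third t n.+1 * cos_third t n.+2 = cos_third t n ^+ 2 - 3 / 4,
      sin_third t n.+1 * sin_third t n.+2 = 1 / 4 - cos_third t n ^+ 2 &
      cos_third t n + cos_third t n.+1 + cos_third t n.+2 = 0].
Proof.
rewrite /cos_third /sin_third; set th := t + 2 * pi * n%:R / 3; set w : R := 2 * pi / 3.
have -> : t + 2 * pi * n.+1%:R / 3 = th + w by rewrite -addn1 natrD /th /w; field.
have -> : t + 2 * pi * n.+2%:R / 3 = th - w + pi *+ 2.
  by rewrite -addn2 natrD mulr2n /th /w; field.
have cw := @cos_2pi3; have sw := @sin_2pi3_sqr; rewrite -/w in cw sw.
clearbody th w; rewrite cosD2pi sinD2pi !cosD !sinD cosN sinN.
have s2 := sin2cos2 th; split.
- transitivity (cos th ^+ 2 * cos w ^+ 2 - sin th ^+ 2 * sin w ^+ 2); first ring.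
  by rewrite sw s2 cw; field.
- transitivity (sin th ^+ 2 * cos w ^+ 2 - cos th ^+ 2 * sin w ^+ 2); first ring.
  by rewrite sw s2 cw; field.
- by rewrite cw; field.
Qed.

Lemma quadratic_cos_eq0 (p q r : R) :
  (forall u, p * cos u ^+ 2 + q * cos u + r = 0) <-> [/\ p = 0, q = 0 & r = 0].
Proof.
split=> [vanish | [-> -> ->] u]; last by rewrite !mul0r !addr0.
have := vanish 0; have := vanish pi; have := vanish (pi / 2).
rewrite cos0 cospi cos_pihalf expr0n sqrrN expr1n /= !mulr0 !mulr1 => ?; split; lra.
Qed.

End Trigonometry.

(* [EVar n] stands for the n-th entry of [example_env] below:
   lam, a, b, c_1, c_2, c_3, s_1, s_2, s_3, mu / 2. *)
Definition sXodd (k : nat) : sform :=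
  [:: (EVar 0, msingle (3 + k)%N);
      (EMul (EVar 0) (EAdd (EMul (EVar 1) (EVar (3 + k)%N)) (EVar 2)), msingle k)].
Definition sXeven (k : nat) : sform := [:: (EMul (EInt 4) (EVar (6 + k)%N), msingle k)].
Definition sXi : sform * sform :=
  scwedge (scwedge (sXodd 0, sXeven 0) (sXodd 1, sXeven 1)) (sXodd 2, sXeven 2).
Definition sxi : sform :=
  swedge (sXodd 0) (sXeven 0) ++ (swedge (sXodd 1) (sXeven 1) ++ swedge (sXodd 2) (sXeven 2)).
Definition sdReXi : sform := sd sXi.1.
Definition sxi_sq : sform := sscale (EVar 9) (swedge sxi sxi).

(* [key k] encodes e_i e_j f_i f_j, where {i, j, k} = {0, 1, 2}. *)
Definition key (k : nat) : mask := mkseq (fun i => (i %% 3 != k)%N) 6.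

Lemma ssupport_equation : ssupport sdReXi sxi_sq = [:: key 2; key 1; key 0].
Proof. by vm_compute. Qed.

Section Example.
Variables (R : realType) (lam a b mu : R).

Definition residual (c : R) : R :=
  - (2 * lam ^+ 3 * a ^+ 2 + 32 * lam + 16 * lam ^+ 2 * mu) * c ^+ 2
  + -2 * lam ^+ 3 * a * (1 - b) * c
  + (8 * lam + 4 * lam ^+ 2 * mu - 2 * lam ^+ 3 * (b + b ^+ 2 - 3 / 4 * a ^+ 2)).

Definition key_coefficient (c c1 c2 s1 s2 : R) : R :=
  -2 * lam ^+ 3 * ((a * c1 + b) * (a * c2 + b) + a * c + b)
  + (32 * lam + 16 * lam ^+ 2 * mu) * s1 * s2.

Lemma key_coefficient_residual c c1 c2 s1 s2 :
  c1 * c2 = c ^+ 2 - 3 / 4 -> s1 * s2 = 1 / 4 - c ^+ 2 -> c + c1 + c2 = 0 ->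
  key_coefficient c c1 c2 s1 s2 = residual c.
Proof.
move=> c12 s12 csum; have c1Dc2 : c1 + c2 = - c by lra.
rewrite /key_coefficient -[_ * s1 * s2]mulrA s12.
have -> : (a * c1 + b) * (a * c2 + b) = a ^+ 2 * (c1 * c2) + a * b * (c1 + c2) + b ^+ 2 by ring.
by rewrite c12 c1Dc2 /residual; field.
Qed.

Variable t : R.

Definition example_env (n : nat) : R :=
  nth 0 [:: lam; a; b; cos_third t 0; cos_third t 1; cos_third t 2;
            sin_third t 0; sin_third t 1; sin_third t 2; mu / 2] n.

Local Notation eval_expr := (eval_expr example_env).
Local Notation eval_sform := (eval_sform example_env).

Ltac compute_scoeff :=
  match goal with |- context [scoeff ?l ?m] =>
    let v := eval vm_compute in (scoeff l m) in
    have -> : scoeff l m = v by vm_compute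
  end.

Lemma scoeff_diff_key k : (k < 3)%N ->
  eval_expr (scoeff sdReXi (key k)) - eval_expr (scoeff sxi_sq (key k)) =
  key_coefficient (cos_third t k) (cos_third t k.+1) (cos_third t k.+2)
                  (sin_third t k.+1) (sin_third t k.+2).
Proof.
case: k => [|[|[|//]]] _; do 2 compute_scoeff;
  rewrite /key_coefficient /example_env /= ?cos_thirdS3 ?sin_thirdS3; by field.
Qed.

Lemma scoeff_diff_key_residual k : (k < 3)%N ->
  eval_expr (scoeff sdReXi (key k)) - eval_expr (scoeff sxi_sq (key k)) =
  residual (cos_third t k).
Proof.
move=> lt_k3; have [c12 s12 csum] := cos_third_relations t k.
by rewrite scoeff_diff_key // key_coefficient_residual.
Qed.

Lemma Xodd_symbolic (k : 'I_3) : Xodd lam a b t k = eval_sform (sXodd k).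
Proof.
have lt_k3 := ltn_ord k.
rewrite /Xodd !eval_sform_cons eval_sform_nil addr0 !set_of_msingle; [|lia..].
by case: k lt_k3 => -[|[|[|//]]].
Qed.

Lemma Xeven_symbolic (k : 'I_3) : Xeven t k = eval_sform (sXeven k).
Proof.
have lt_k3 := ltn_ord k.
rewrite /Xeven !eval_sform_cons eval_sform_nil addr0 set_of_msingle; [|lia].
by case: k lt_k3 => -[|[|[|//]]].
Qed.

Lemma equation_symbolic :
  dform (Xi lam a b t).1 = scalef (mu / 2) (wedge (xi lam a b t) (xi lam a b t)) <->
  eval_sform sdReXi = eval_sform sxi_sq.
Proof.
have -> : Xi lam a b t = (eval_sform sXi.1, eval_sform sXi.2).
  by rewrite /Xi /Xc !Xodd_symbolic !Xeven_symbolic !eval_scwedge.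
have -> : xi lam a b t = eval_sform sxi.
  rewrite /xi !big_ord_recl big_ord0 addr0 !Xodd_symbolic !Xeven_symbolic.
  by rewrite -!eval_swedge -!eval_sform_cat.
by rewrite /sdReXi /sxi_sq eval_sd eval_sscale eval_swedge.
Qed.

Lemma equation_iff_residual :
  dform (Xi lam a b t).1 = scalef (mu / 2) (wedge (xi lam a b t) (xi lam a b t)) <->
  [/\ residual (cos_third t 0) = 0, residual (cos_third t 1) = 0
    & residual (cos_third t 2) = 0].
Proof.
rewrite equation_symbolic eval_sform_eqP ssupport_equation.
split=> [coeffs_eq | [res0 res1 res2] m].
  by split; rewrite -scoeff_diff_key_residual // coeffs_eq ?subrr // !inE eqxx ?orbT.
by rewrite !inE => /or3P [] /eqP ->; apply/eqP;
  rewrite -subr_eq0 scoeff_diff_key_residual // ?res0 ?res1 ?res2.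
Qed.
End Example.

Lemma residual_coefficients_eq0 (R : realFieldType) (lam : R) a b mu : lam != 0 ->
  [/\ - (2 * lam ^+ 3 * a ^+ 2 + 32 * lam + 16 * lam ^+ 2 * mu) = 0,
      -2 * lam ^+ 3 * a * (1 - b) = 0
    & 8 * lam + 4 * lam ^+ 2 * mu - 2 * lam ^+ 3 * (b + b ^+ 2 - 3 / 4 * a ^+ 2) = 0] <->
  ((((a = 0 /\ b = -1) \/ (a = 0 /\ b = 0)) /\ mu = - 2 / lam)
   \/ (((a = 2 \/ a = -2) /\ b = 1) /\ mu = - (lam ^+ 2 + 4) / (2 * lam))).
Proof.
move=> lam0; have lam3 : lam ^+ 3 != 0 by rewrite expf_neq0.
split=> [[c2 c1 c0] | ]; last first.
  by case=> [[[[-> ->]|[-> ->]] ->]|[[[->|->] ->] ->]]; split; field.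
have mu_eq : mu = - (lam ^+ 2 * a ^+ 2 + 16) / (8 * lam).
  transitivity (16 * lam ^+ 2 * mu / (16 * lam ^+ 2)); first by field.
  by rewrite (_ : 16 * lam ^+ 2 * mu = - (2 * lam ^+ 3 * a ^+ 2 + 32 * lam)); [field | lra].
have ab_eq : a * (1 - b) = 0.
  apply: (@mulfI _ (-2 * lam ^+ 3)); first by rewrite mulf_neq0 ?oppr_eq0 ?pnatr_eq0.
  by rewrite mulr0 -c1; ring.
have a2_eq : a ^+ 2 = 2 * b * (1 + b).
  (* the constant coefficient plus a quarter of the leading one *)
  have : lam ^+ 3 * (a ^+ 2 - 2 * b * (1 + b)) = 0 by lra.
  by move/eqP; rewrite mulf_eq0 (negPf lam3) subr_eq0 => /eqP.
have [a0 | b1] : a = 0 \/ b = 1.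
  by move/eqP: ab_eq; rewrite mulf_eq0 subr_eq0 => /orP [] /eqP; [left | right].
- left; split; last by rewrite mu_eq a0; field.
  have : b * (1 + b) = 0.
    by apply: (@mulfI _ 2); rewrite ?pnatr_eq0 // mulr0 mulrA -a2_eq a0 expr0n.
  move/eqP; rewrite mulf_eq0 addrC addr_eq0 => /orP [] /eqP ->; [right | left]; by split.
- right; split; last by rewrite mu_eq a2_eq b1; field.
  split=> //; move/eqP: a2_eq; rewrite b1 (_ : 2 * 1 * (1 + 1) = 2 ^+ 2 :> R); last by ring.
  by rewrite eqf_sqr => /orP [] /eqP; [left | right].
Qed.

Theorem proposition5p1 (R : realType) (lam a b : R) (hlam : lam != 0) (mu : R) :
  (forall t : R,
     dform (Xi lam a b t).1 = scalef (mu / 2) (wedge (xi lam a b t) (xi lam a b t)))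
  <->
  ((((a = 0 /\ b = -1) \/ (a = 0 /\ b = 0)) /\ mu = - 2 / lam)
   \/ (((a = 2 \/ a = -2) /\ b = 1) /\ mu = - (lam ^+ 2 + 4) / (2 * lam))).
Proof.
apply: (@iff_trans _ (forall u : R, residual lam a b mu (cos u) = 0)).
  split=> [equation u | vanish t].
    by have [+ _ _] := (equation_iff_residual lam a b mu u).1 (equation u); rewrite cos_third0.
  by apply/(equation_iff_residual lam a b mu t); split; apply: vanish.
exact: iff_trans (quadratic_cos_eq0 _ _ _) (residual_coefficients_eq0 a b mu hlam).
Qed.
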